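(* Let $a,b\in(0,+\infty)$ satisfy $1<a-b$. Let $\varepsilon$ satisfy $$0<\varepsilon<\min\left\{1;\ \frac{a-1-b}{224\,b}\right\}.$$ Define $\varphi:\mathbb{R}\to\mathbb{R}$ by $$\varphi(t)=\begin{cases}\frac{3}{2}\pi & \text{if } t\in(-\infty,1],\\ \frac{3}{2}\pi+\varepsilon\ln\ln\big(e+(t-1)^4\big) & \text{if } t\in(1,+\infty),\end{cases}$$ and define $g$ on $[0,+\infty)$ by $g(t)=t^{a+b\sin(\varphi(t))}$. Then the following hold. (i) $g:[0,+\infty)\to[0,+\infty)$, $g(0)=0$, and $g(t)>0$ for $t>0$. (ii) $g\in C^1([0,+\infty))\cap C^2((0,+\infty))$. (iii) $\lim_{t\to0^+}\frac{g(t)}{t}=0$, $\lim_{t\to+\infty}\frac{g(t)}{t}=+\infty$, and $g'(0)=0$. (iv) For every $t>0$, $$0<\{-8b\varepsilon+a-b\}\frac{g(t)}{t}\le g'(t)\le\{8b\varepsilon+a+b\}\frac{g(t)}{t}.$$ (v) For every $t>0$, $$0<\{-8b\varepsilon+a-b\}\,t^{a-b-1}\le g'(t)\le\{8b\varepsilon+a+b\}\,[t^{a-b-1}+t^{a+b-1}].$$ (vi) For every $t>0$, $$0<\{-224b\varepsilon+a-1-b\}\frac{g'(t)}{t}\le g''(t)\le\{224b\varepsilon+a-1+b\}\frac{g'(t)}{t}.$$ (vii) $g$ is strictly convex on $[0,+\infty)$.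
   Context: Here $e$ is Euler's number and $\ln$ the natural logarithm. *)

From Stdlib Require Import Reals.
From Coquelicot Require Import Coquelicot.
Open Scope R_scope.

Definition phi (eps t : R) : R :=
  if Rle_dec t 1 then 3 / 2 * PI
  else 3 / 2 * PI + eps * ln (ln (exp 1 + (t - 1) ^ 4)).

(* g(t) = t^(a + b sin(phi t)) for t > 0, g(0) = 0 (and 0 for t < 0, which is
   outside the domain [0,+oo) and never used). *)
Definition g (a b eps t : R) : R :=
  if Rlt_dec 0 t then Rpower t (a + b * sin (phi eps t)) else 0.

(* Write g(t) = t^p(t) with p = a + b sin(phi) on t > 0.  The elasticity
   Q := t g'/g = p + t ln t p' satisfies t^2 g''/g = Q (Q - 1) + t Q', so
   (iv)-(vi) reduce to |Q - p| <= 8 b eps and |t Q'| <= 168 b eps, with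
   p in [a - b, a + b] and 8 + 168 <= 224.  These bounds hold because
   phi - 3pi/2 = eps ln ln (e + (t-1)^4) grows so slowly that t phi',
   t ln t phi', t^2 ln t phi'^2 and t^2 ln t phi'' are absolutely bounded
   multiples of eps (resp. eps^2).  phi is C^2 because it glues the constant
   3pi/2 to a function smooth on all of R whose first two derivatives vanish
   at 1.  On (0, 1], g(t) = t^(a-b), which gives the behaviour at 0, and strict
   convexity follows from g'' > 0 through the mean value theorem. *)

From Stdlib Require Import Reals Lra Psatz.
From Coquelicot Require Import Coquelicot.
Open Scope R_scope.

Ltac split_conj := repeat match goal with |- _ /\ _ => split end.

Definition glue (f1 f2 : R -> R) (c x : R) : R :=
  if Rle_dec x c then f1 x else f2 x.

Lemma glue_left_loc (f1 f2 : R -> R) (c x : R) :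
  x < c -> locally x (fun y => f1 y = glue f1 f2 c y).
Proof.
intros Hx; apply (filter_imp (fun y => y < c)); [|exact (open_lt c x Hx)].
intros y Hy; unfold glue; destruct (Rle_dec y c); [reflexivity|lra].
Qed.

Lemma glue_right_loc (f1 f2 : R -> R) (c x : R) :
  c < x -> locally x (fun y => f2 y = glue f1 f2 c y).
Proof.
intros Hx; apply (filter_imp (fun y => c < y)); [|exact (open_gt c x Hx)].
intros y Hy; unfold glue; destruct (Rle_dec y c); [lra|reflexivity].
Qed.

Lemma continuous_glue (f1 f2 : R -> R) (c x : R) :
  (forall y, continuous f1 y) -> (forall y, continuous f2 y) -> f1 c = f2 c ->
  continuous (glue f1 f2 c) x.
Proof.
intros C1 C2 E.
destruct (Rtotal_order x c) as [Hx|[<-|Hx]].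
- exact (continuous_ext_loc _ _ _ (glue_left_loc f1 f2 c x Hx) (C1 x)).
- apply filterlim_locally; intros e.
  generalize (filter_and _ _ (proj1 (filterlim_locally _ _) (C1 x) e)
                             (proj1 (filterlim_locally _ _) (C2 x) e)).
  apply filter_imp; intros y [B1 B2]; unfold glue.
  destruct (Rle_dec x x) as [_|]; [|lra].
  destruct (Rle_dec y x); [exact B1|rewrite E; exact B2].
- exact (continuous_ext_loc _ _ _ (glue_right_loc f1 f2 c x Hx) (C2 x)).
Qed.

Lemma is_derive_glue (f1 f2 d1 d2 : R -> R) (c x : R) :
  (forall y, is_derive f1 y (d1 y)) -> (forall y, is_derive f2 y (d2 y)) ->
  f1 c = f2 c -> d1 c = d2 c ->
  is_derive (glue f1 f2 c) x (glue d1 d2 c x).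
Proof.
intros D1 D2 E1 E2.
destruct (Rtotal_order x c) as [Hx|[<-|Hx]].
- unfold glue at 2; destruct (Rle_dec x c); [|lra].
  exact (is_derive_ext_loc _ _ _ _ (glue_left_loc f1 f2 c x Hx) (D1 x)).
- unfold glue at 2; destruct (Rle_dec x x) as [_|]; [|lra].
  apply is_derive_Reals; intros e He.
  destruct (proj1 (is_derive_Reals _ _ _) (D1 x) e He) as [r1 H1].
  destruct (proj1 (is_derive_Reals _ _ _) (D2 x) e He) as [r2 H2].
  exists (mkposreal _ (Rmin_pos _ _ (cond_pos r1) (cond_pos r2))); simpl.
  intros h Hh0 Hh; unfold glue.
  destruct (Rle_dec x x) as [_|]; [|lra].
  destruct (Rle_dec (x + h) x).
  + apply H1; [exact Hh0|]. apply Rlt_le_trans with (1 := Hh); apply Rmin_l.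
  + rewrite E1, E2; apply H2; [exact Hh0|].
    apply Rlt_le_trans with (1 := Hh); apply Rmin_r.
- unfold glue at 2; destruct (Rle_dec x c); [lra|].
  exact (is_derive_ext_loc _ _ _ _ (glue_right_loc f1 f2 c x Hx) (D2 x)).
Qed.

Lemma MVT_strict (f df : R -> R) x y : x < y ->
  (forall c, x < c < y -> is_derive f c (df c)) ->
  (forall c, x <= c <= y -> continuity_pt f c) ->
  exists c, x < c < y /\ f y - f x = df c * (y - x).
Proof.
intros Hxy Hd Hc.
pose (pr := fun c (H : x < c < y) =>
  exist (fun l => derivable_pt_abs f c l) (df c) (proj1 (is_derive_Reals _ _ _) (Hd c H))).
destruct (MVT f id x y pr (fun c _ => derivable_pt_id c) Hxy Hc) as [c [Hc' E]].
- intros c _; apply derivable_continuous_pt, derivable_pt_id.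
- exists c; split; [exact Hc'|].
  rewrite derive_pt_id in E; simpl in E; unfold id in E; lra.
Qed.

Lemma continuity_pt_of_is_derive (f : R -> R) c l : is_derive f c l -> continuity_pt f c.
Proof.
intros H; apply continuity_pt_filterlim.
exact (ex_derive_continuous (V := R_NormedModule) _ _ (ex_intro _ _ H)).
Qed.

Lemma convex_combination_lt (G G1 : R -> R) x y l : x < y -> 0 < l < 1 ->
  (forall c, x < c < y -> is_derive G c (G1 c)) ->
  (forall c, x <= c <= y -> continuity_pt G c) ->
  (forall c d, x < c < d -> d < y -> G1 c < G1 d) ->
  G (l * x + (1 - l) * y) < l * G x + (1 - l) * G y.
Proof.
intros Hxy Hl D C Incr; set (z := l * x + (1 - l) * y).
assert (Hz : x < z < y) by (unfold z; split; nra).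
destruct (MVT_strict G G1 x z) as [c1 [Hc1 E1]]; [lra|intros; apply D; lra|intros; apply C; lra|].
destruct (MVT_strict G G1 z y) as [c2 [Hc2 E2]]; [lra|intros; apply D; lra|intros; apply C; lra|].
assert (H12 : G1 c1 < G1 c2) by (apply Incr; lra).
assert (E : l * G x + (1 - l) * G y - G z = l * (1 - l) * (y - x) * (G1 c2 - G1 c1)).
{ replace (l * G x + (1 - l) * G y - G z) with (- l * (G z - G x) + (1 - l) * (G y - G z))
    by ring.
  rewrite E1, E2; unfold z; ring. }
assert (0 < l * (1 - l) * (y - x)) by (apply Rmult_lt_0_compat; [apply Rmult_lt_0_compat|]; lra).
nra.
Qed.

Lemma strict_convexity_nonneg (G G1 G2 : R -> R) :
  continuity_pt G 0 ->
  (forall t, 0 < t -> is_derive G t (G1 t)) ->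
  (forall t, 0 < t -> is_derive G1 t (G2 t)) ->
  (forall t, 0 < t -> 0 < G2 t) ->
  forall x y l, 0 <= x -> 0 <= y -> x <> y -> 0 < l < 1 ->
    G (l * x + (1 - l) * y) < l * G x + (1 - l) * G y.
Proof.
intros C0 D1 D2 Pos.
assert (Incr : forall c d, 0 < c < d -> G1 c < G1 d).
{ intros c d Hcd.
  destruct (MVT_strict G1 G2 c d) as [e [He E]]; [lra|intros; apply D2; lra| |].
  - intros s Hs; exact (continuity_pt_of_is_derive _ _ _ (D2 s ltac:(lra))).
  - assert (0 < G2 e) by (apply Pos; lra); nra. }
assert (Main : forall x y l, 0 <= x < y -> 0 < l < 1 ->
  G (l * x + (1 - l) * y) < l * G x + (1 - l) * G y).
{ intros x y l Hxy Hl; apply (convex_combination_lt G G1); try lra.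
  - intros; apply D1; lra.
  - intros c Hc; destruct (Req_dec c 0) as [->|Hc0]; [exact C0|].
    exact (continuity_pt_of_is_derive _ _ _ (D1 c ltac:(lra))).
  - intros; apply Incr; lra. }
intros x y l Hx Hy Hxy Hl; destruct (Rlt_dec x y) as [Hlt|Hge].
- apply Main; lra.
- replace (l * x + (1 - l) * y) with ((1 - l) * y + (1 - (1 - l)) * x) by ring.
  replace (l * G x + (1 - l) * G y) with ((1 - l) * G y + (1 - (1 - l)) * G x) by ring.
  apply Main; lra.
Qed.

Lemma Rpower_pos t c : 0 < Rpower t c.
Proof. apply exp_pos. Qed.

Lemma Rpower_le1 x c : 0 < x <= 1 -> 0 <= c -> Rpower x c <= 1.
Proof.
intros Hx Hc; replace 1 with (Rpower 1 c) by (unfold Rpower; rewrite ln_1, Rmult_0_r; apply exp_0).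
apply Rle_Rpower_l; lra.
Qed.

Lemma filterlim_scal_m_infty c : 0 < c ->
  filterlim (fun y => c * y) (Rbar_locally m_infty) (Rbar_locally m_infty).
Proof.
intros Hc P [M HM]; exists (M / c); intros x Hx; apply HM.
apply Rlt_div_r in Hx; lra.
Qed.

Lemma filterlim_scal_p_infty c : 0 < c ->
  filterlim (fun y => c * y) (Rbar_locally p_infty) (Rbar_locally p_infty).
Proof.
intros Hc P [M HM]; exists (M / c); intros x Hx; apply HM.
apply Rlt_div_l in Hx; lra.
Qed.

Lemma Rpower_at_0 c : 0 < c -> filterlim (fun t => Rpower t c) (at_right 0) (locally 0).
Proof.
intros Hc; unfold Rpower.
apply (filterlim_comp _ _ _ (fun t => c * ln t) exp _ (Rbar_locally m_infty));
  [|exact is_lim_exp_m].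
apply (filterlim_comp _ _ _ ln (fun y => c * y) _ (Rbar_locally m_infty));
  [exact is_lim_ln_0|exact (filterlim_scal_m_infty c Hc)].
Qed.

Lemma Rpower_at_p_infty c : 0 < c ->
  filterlim (fun t => Rpower t c) (Rbar_locally p_infty) (Rbar_locally p_infty).
Proof.
intros Hc; unfold Rpower.
apply (filterlim_comp _ _ _ (fun t => c * ln t) exp _ (Rbar_locally p_infty));
  [|exact is_lim_exp_p].
apply (filterlim_comp _ _ _ ln (fun y => c * y) _ (Rbar_locally p_infty));
  [exact is_lim_ln_p|exact (filterlim_scal_p_infty c Hc)].
Qed.

Lemma at_right_0_le1 : at_right 0 (fun t => 0 < t <= 1).
Proof.
exists (mkposreal 1 Rlt_0_1); intros y Hy Hy0.
change (Rabs (y - 0) < 1) in Hy; apply Rabs_def2 in Hy; lra.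
Qed.

Section VariableExponentPower.

Variables p p1 p2 f : R -> R.
Hypothesis p_derive : forall t, is_derive p t (p1 t).
Hypothesis p1_derive : forall t, is_derive p1 t (p2 t).
Hypothesis p2_continuous : forall t, continuous p2 t.
Hypothesis f_Rpower : forall t, 0 < t -> f t = Rpower t (p t).

Definition elasticity t := p t + t * ln t * p1 t.
Definition elasticity1 t := (2 + ln t) * p1 t + t * ln t * p2 t.
Definition vpow_deriv t := f t * elasticity t / t.
Definition vpow_deriv2 t :=
  f t / t ^ 2 * (elasticity t * (elasticity t - 1) + t * elasticity1 t).

Lemma f_exp_loc t : 0 < t -> locally t (fun x => exp (p x * ln x) = f x).
Proof.
intros Ht; apply (filter_imp (fun x => 0 < x)); [|exact (open_gt 0 t Ht)].
intros x Hx; rewrite f_Rpower by exact Hx; reflexivity.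
Qed.

Lemma is_derive_vpow t : 0 < t -> is_derive f t (vpow_deriv t).
Proof.
intros Ht; apply (is_derive_ext_loc _ _ _ _ (f_exp_loc t Ht)).
unfold vpow_deriv, elasticity; rewrite f_Rpower by exact Ht; unfold Rpower.
auto_derive; [exact (conj (ex_intro _ _ (p_derive t)) (conj Ht I))|].
rewrite (is_derive_unique (fun x : R => p x) _ _ (p_derive t)); field; lra.
Qed.

Lemma is_derive_elasticity t : 0 < t -> is_derive elasticity t (elasticity1 t).
Proof.
intros Ht; unfold elasticity, elasticity1; auto_derive.
- split_conj; [exact (ex_intro _ _ (p_derive t))|exact Ht
              |exact (ex_intro _ _ (p1_derive t))|exact I].
- rewrite (is_derive_unique (fun x : R => p x) _ _ (p_derive t)).
  rewrite (is_derive_unique (fun x : R => p1 x) _ _ (p1_derive t)).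
  field; lra.
Qed.

Lemma is_derive_vpow_deriv t : 0 < t -> is_derive vpow_deriv t (vpow_deriv2 t).
Proof.
intros Ht; unfold vpow_deriv; auto_derive.
- split_conj; [exact (ex_intro _ _ (is_derive_vpow t Ht))
              |exact (ex_intro _ _ (is_derive_elasticity t Ht))|lra|exact I].
- rewrite (is_derive_unique (fun x : R => f x) _ _ (is_derive_vpow t Ht)).
  rewrite (is_derive_unique (fun x : R => elasticity x) _ _ (is_derive_elasticity t Ht)).
  unfold vpow_deriv, vpow_deriv2; field; lra.
Qed.

Lemma continuous_vpow_deriv2 t : 0 < t -> continuous vpow_deriv2 t.
Proof.
intros Ht.
assert (Cp1 : continuous p1 t)
  by exact (ex_derive_continuous (V := R_NormedModule) _ _ (ex_intro _ _ (p1_derive t))).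
assert (CQ : continuous elasticity t)
  by exact (ex_derive_continuous (V := R_NormedModule) _ _
              (ex_intro _ _ (is_derive_elasticity t Ht))).
unfold vpow_deriv2; apply (continuous_mult (K := R_AbsRing)).
- apply (ex_derive_continuous (V := R_NormedModule)); auto_derive.
  split_conj; [exact (ex_intro _ _ (is_derive_vpow t Ht))|intros H; nra|exact I].
- unfold elasticity1.
  apply (continuous_plus (V := R_NormedModule)); apply (continuous_mult (K := R_AbsRing)).
  + exact CQ.
  + apply (continuous_plus (V := R_NormedModule)); [exact CQ|exact (continuous_const _ t)].
  + exact (continuous_id t).
  + apply (continuous_plus (V := R_NormedModule)); apply (continuous_mult (K := R_AbsRing)).
    * apply (continuous_plus (V := R_NormedModule));
        [exact (continuous_const _ t)|exact (continuous_ln t Ht)].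
    * exact Cp1.
    * apply (continuous_mult (K := R_AbsRing));
        [exact (continuous_id t)|exact (continuous_ln t Ht)].
    * exact (p2_continuous t).
Qed.

End VariableExponentPower.

Definition e_quartic (t : R) := exp 1 + (t - 1) ^ 4.
Definition lnln (t : R) := ln (ln (e_quartic t)).
Definition lnln1 (t : R) := 4 * (t - 1) ^ 3 / (e_quartic t * ln (e_quartic t)).
Definition lnln2 (t : R) :=
  12 * (t - 1) ^ 2 / (e_quartic t * ln (e_quartic t))
  - (ln (e_quartic t) + 1) * lnln1 t ^ 2.

Lemma exp1_gt2 : 2 < exp 1.
Proof. generalize (exp_ineq1 1); lra. Qed.

Lemma e_quartic_ge t : 2 + (t - 1) ^ 4 <= e_quartic t.
Proof. unfold e_quartic; generalize exp1_gt2; lra. Qed.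

Lemma ln_e_quartic_ge1 t : 1 <= ln (e_quartic t).
Proof.
rewrite <- ln_exp at 1; apply ln_le; [apply exp_pos|].
unfold e_quartic; generalize (pow2_ge_0 ((t - 1) ^ 2)); rewrite <- pow_mult; simpl; lra.
Qed.

Lemma e_quartic_pos t : 0 < e_quartic t.
Proof. generalize (e_quartic_ge t) (pow2_ge_0 ((t - 1) ^ 2)); rewrite <- pow_mult; simpl; lra. Qed.

Lemma ln_le_ln_e_quartic t : 0 < t -> ln t <= ln (e_quartic t).
Proof.
intros Ht; apply ln_le; [exact Ht|].
generalize (e_quartic_ge t) (pow2_ge_0 ((t - 1) ^ 2 - /2)) (pow2_ge_0 (t - 1 - /2)).
intros; nra.
Qed.

Lemma is_derive_e_quartic t : is_derive e_quartic t (4 * (t - 1) ^ 3).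
Proof. unfold e_quartic; auto_derive; [exact I|ring]. Qed.

Lemma Derive_e_quartic t : Derive e_quartic t = 4 * (t - 1) ^ 3.
Proof. exact (is_derive_unique _ _ _ (is_derive_e_quartic t)). Qed.

Ltac e_quartic_side_goals t :=
  generalize (e_quartic_pos t) (ln_e_quartic_ge1 t); intros;
  split_conj; try exact (ex_intro _ _ (is_derive_e_quartic t));
  try (apply Rgt_not_eq, Rmult_lt_0_compat); try lra;
  rewrite ?Derive_e_quartic.

Lemma is_derive_lnln t : is_derive lnln t (lnln1 t).
Proof.
unfold lnln, lnln1; auto_derive; e_quartic_side_goals t.
field; lra.
Qed.

Lemma is_derive_lnln1 t : is_derive lnln1 t (lnln2 t).
Proof.
unfold lnln1, lnln2; auto_derive; e_quartic_side_goals t.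
unfold lnln1; field; lra.
Qed.

Lemma continuous_lnln2 t : continuous lnln2 t.
Proof.
apply (ex_derive_continuous (V := R_NormedModule)).
unfold lnln2, lnln1; auto_derive; e_quartic_side_goals t.
Qed.

Lemma sq_succ_sq_le u : 0 <= u -> (u + 1) ^ 2 * u ^ 2 <= 3 * (2 + u ^ 4).
Proof.
intros Hu; generalize (pow2_ge_0 (u ^ 2 - u)) (pow2_ge_0 (u ^ 2 - 1)); intros; nra.
Qed.

Lemma sq_succ_sixth_le u : 0 <= u -> (u + 1) ^ 2 * u ^ 6 <= 3 * (2 + u ^ 4) ^ 2.
Proof.
intros Hu.
assert (h4 : 0 <= u ^ 4) by (apply pow_le; lra).
assert (h6 : 0 <= u ^ 6) by (apply pow_le; lra).
assert (e6 : u ^ 6 = u ^ 4 * u ^ 2) by ring.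
destruct (Rle_dec u 2).
- assert (u ^ 2 <= 4) by nra.
  assert (u ^ 6 <= 4 * u ^ 4) by nra.
  assert (0 <= u ^ 6 * (u - /2) ^ 2) by (apply Rmult_le_pos; [lra|apply pow2_ge_0]).
  nra.
- assert (9/4 <= (u - /2) ^ 2) by nra.
  assert (9/4 * u ^ 6 <= u ^ 6 * (u - /2) ^ 2) by nra.
  nra.
Qed.

Lemma lnln1_nonneg t : 1 <= t -> 0 <= lnln1 t.
Proof.
intros Ht; unfold lnln1.
generalize (e_quartic_pos t) (ln_e_quartic_ge1 t) (pow_le (t - 1) 3); intros.
apply Rdiv_le_0_compat; nra.
Qed.

Lemma lnln1_scaled_sq t : 1 < t -> (t * lnln1 t * ln (e_quartic t)) ^ 2 <= 48.
Proof.
intros Ht.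
generalize (e_quartic_pos t) (ln_e_quartic_ge1 t) (e_quartic_ge t); intros.
replace ((t * lnln1 t * ln (e_quartic t)) ^ 2)
  with (16 * (((t - 1) + 1) ^ 2 * (t - 1) ^ 6) / e_quartic t ^ 2)
  by (unfold lnln1; field; lra).
apply Rle_div_l; [apply pow_lt; lra|].
generalize (sq_succ_sixth_le (t - 1) ltac:(lra)) (pow_le (t - 1) 4); intros; nra.
Qed.

Lemma lnln1_scaled t : 1 < t -> t * lnln1 t * ln (e_quartic t) <= 8.
Proof. intros Ht; generalize (lnln1_scaled_sq t Ht); intros; nra. Qed.

Lemma lnln2_scaled t : 1 < t -> Rabs (t ^ 2 * lnln2 t * ln (e_quartic t)) <= 96.
Proof.
intros Ht.
generalize (e_quartic_pos t) (ln_e_quartic_ge1 t) (e_quartic_ge t); intros.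
set (L := ln (e_quartic t)) in *.
set (A := 12 * (((t - 1) + 1) ^ 2 * (t - 1) ^ 2) / e_quartic t).
set (B := (t * lnln1 t * L) ^ 2).
assert (HA : 0 <= A <= 36).
{ unfold A; split.
  - apply Rdiv_le_0_compat; [|lra]. generalize (pow2_ge_0 t) (pow2_ge_0 (t - 1)); nra.
  - apply Rle_div_l; [lra|].
    generalize (sq_succ_sq_le (t - 1) ltac:(lra)); intros; nra. }
assert (HB : 0 <= B <= 48) by (split; [apply pow2_ge_0|apply lnln1_scaled_sq; exact Ht]).
assert (E : t ^ 2 * lnln2 t * L * L = A * L - (L + 1) * B)
  by (unfold A, B, lnln2; fold L; field; lra).
apply Rabs_le; split; nra.
Qed.

Definition phi1 (eps : R) := glue (fun _ => 0) (fun t => eps * lnln1 t) 1.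
Definition phi2 (eps : R) := glue (fun _ => 0) (fun t => eps * lnln2 t) 1.

Lemma phi_glue eps :
  phi eps = glue (fun _ => 3 / 2 * PI) (fun t => 3 / 2 * PI + eps * lnln t) 1.
Proof. reflexivity. Qed.

Lemma lnln_1 : lnln 1 = 0.
Proof.
unfold lnln, e_quartic.
rewrite Rminus_diag, pow_ne_zero, Rplus_0_r, ln_exp, ln_1 by lia; reflexivity.
Qed.

Lemma lnln1_1 : lnln1 1 = 0.
Proof. unfold lnln1; rewrite Rminus_diag; unfold Rdiv; ring. Qed.

Lemma lnln2_1 : lnln2 1 = 0.
Proof. unfold lnln2; rewrite lnln1_1, Rminus_diag; unfold Rdiv; ring. Qed.

Lemma is_derive_phi eps t : is_derive (phi eps) t (phi1 eps t).
Proof.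
rewrite phi_glue; apply is_derive_glue.
- intros; auto_derive; [exact I|ring].
- intros; auto_derive; [eexists; apply is_derive_lnln|].
  rewrite (is_derive_unique (fun x : R => lnln x) _ _ (is_derive_lnln y)); ring.
- rewrite lnln_1; ring.
- rewrite lnln1_1; ring.
Qed.

Lemma is_derive_phi1 eps t : is_derive (phi1 eps) t (phi2 eps t).
Proof.
apply is_derive_glue.
- intros; auto_derive; [exact I|ring].
- intros; auto_derive; [eexists; apply is_derive_lnln1|].
  rewrite (is_derive_unique (fun x : R => lnln1 x) _ _ (is_derive_lnln1 y)); ring.
- rewrite lnln1_1; ring.
- rewrite lnln2_1; ring.
Qed.

Lemma continuous_phi2 eps t : continuous (phi2 eps) t.
Proof.
apply continuous_glue.
- intros; apply continuous_const.
- intros y; apply (continuous_mult (K := R_AbsRing));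
    [apply continuous_const|apply continuous_lnln2].
- rewrite lnln2_1; ring.
Qed.

Lemma ln_pos_gt1 t : 1 < t -> 0 < ln t.
Proof. intros; rewrite <- ln_1; apply ln_increasing; lra. Qed.

Lemma phi1_scaled_bounds eps t : 0 < eps -> 0 < t ->
  Rabs (t * phi1 eps t) <= 8 * eps /\
  Rabs (t * ln t * phi1 eps t) <= 8 * eps /\
  Rabs (t ^ 2 * ln t * phi1 eps t ^ 2) <= 48 * eps ^ 2.
Proof.
intros He Ht; unfold phi1, glue; destruct (Rle_dec t 1).
- split_conj; match goal with |- Rabs ?x <= _ => replace x with 0 by ring end;
    rewrite Rabs_R0; nra.
- generalize (lnln1_nonneg t ltac:(lra)) (lnln1_scaled t ltac:(lra))
    (lnln1_scaled_sq t ltac:(lra)) (ln_le_ln_e_quartic t Ht)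
    (ln_e_quartic_ge1 t) (ln_pos_gt1 t ltac:(lra)).
  set (L := ln (e_quartic t)); intros H0 H1 H2 HtL HL Hlt.
  assert (Hw : 0 <= t * lnln1 t) by nra.
  set (w := t * lnln1 t) in *.
  assert (HwL : w * ln t <= 8) by nra.
  assert (Hw2 : w ^ 2 * ln t <= 48).
  { assert (w ^ 2 * ln t <= w ^ 2 * L) by (apply Rmult_le_compat_l; [apply pow2_ge_0|lra]).
    assert (w ^ 2 * L <= (w * L) ^ 2) by (generalize (pow2_ge_0 w); nra).
    lra. }
  replace (t * (eps * lnln1 t)) with (eps * w) by (unfold w; ring).
  replace (t * ln t * (eps * lnln1 t)) with (eps * (w * ln t)) by (unfold w; ring).
  replace (t ^ 2 * ln t * (eps * lnln1 t) ^ 2) with (eps ^ 2 * (w ^ 2 * ln t))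
    by (unfold w; ring).
  assert (0 < eps ^ 2) by (apply pow_lt; lra).
  assert (w <= 8) by nra.
  assert (0 <= w * ln t) by nra.
  assert (0 <= w ^ 2 * ln t) by (generalize (pow2_ge_0 w); nra).
  split_conj; rewrite Rabs_pos_eq; nra.
Qed.

Lemma phi2_scaled_bound eps t : 0 < eps -> 0 < t ->
  Rabs (t ^ 2 * ln t * phi2 eps t) <= 96 * eps.
Proof.
intros He Ht; unfold phi2, glue; destruct (Rle_dec t 1).
- rewrite Rmult_0_r, Rabs_R0; lra.
- generalize (lnln2_scaled t ltac:(lra)) (ln_le_ln_e_quartic t Ht)
    (ln_e_quartic_ge1 t) (ln_pos_gt1 t ltac:(lra)).
  set (L := ln (e_quartic t)); intros H2 HtL HL Hlt.
  replace (t ^ 2 * ln t * (eps * lnln2 t))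
    with (eps * (t ^ 2 * lnln2 t * L) * (ln t / L)) by (field; lra).
  rewrite 2!Rabs_mult, (Rabs_pos_eq eps), (Rabs_pos_eq (ln t / L)) by
    (try apply Rdiv_le_0_compat; lra).
  assert (ln t / L <= 1) by (apply Rle_div_l; lra).
  assert (0 <= ln t / L) by (apply Rdiv_le_0_compat; lra).
  generalize (Rabs_pos (t ^ 2 * lnln2 t * L)); intros.
  assert (Rabs (t ^ 2 * lnln2 t * L) * (ln t / L) <= 96) by nra.
  rewrite Rmult_assoc, (Rmult_comm 96); apply Rmult_le_compat_l; lra.
Qed.

Definition expo (a b eps t : R) := a + b * sin (phi eps t).
Definition expo1 (b eps t : R) := b * cos (phi eps t) * phi1 eps t.
Definition expo2 (b eps t : R) :=
  b * (cos (phi eps t) * phi2 eps t - sin (phi eps t) * phi1 eps t ^ 2).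

Lemma is_derive_expo a b eps t : is_derive (expo a b eps) t (expo1 b eps t).
Proof.
unfold expo, expo1; auto_derive; [exact (ex_intro _ _ (is_derive_phi eps t))|].
rewrite (is_derive_unique (fun x : R => phi eps x) _ _ (is_derive_phi eps t)); ring.
Qed.

Lemma is_derive_expo1 b eps t : is_derive (expo1 b eps) t (expo2 b eps t).
Proof.
unfold expo1, expo2; auto_derive.
- split_conj; [exact (ex_intro _ _ (is_derive_phi eps t))
              |exact (ex_intro _ _ (is_derive_phi1 eps t))|exact I].
- rewrite (is_derive_unique (fun x : R => phi eps x) _ _ (is_derive_phi eps t)).
  rewrite (is_derive_unique (fun x : R => phi1 eps x) _ _ (is_derive_phi1 eps t)).
  ring.
Qed.

Lemma continuous_expo2 b eps t : continuous (expo2 b eps) t.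
Proof.
assert (Cphi : continuous (phi eps) t)
  by exact (ex_derive_continuous (V := R_NormedModule) _ _ (ex_intro _ _ (is_derive_phi eps t))).
assert (Cphi1 : continuous (phi1 eps) t)
  by exact (ex_derive_continuous (V := R_NormedModule) _ _ (ex_intro _ _ (is_derive_phi1 eps t))).
unfold expo2; apply (continuous_mult (K := R_AbsRing)); [exact (continuous_const _ t)|].
apply (continuous_plus (V := R_NormedModule)).
- apply (continuous_mult (K := R_AbsRing));
    [exact (continuous_cos_comp _ _ Cphi)|exact (continuous_phi2 eps t)].
- apply (continuous_opp (V := R_NormedModule)), (continuous_mult (K := R_AbsRing));
    [exact (continuous_sin_comp _ _ Cphi)|].
  apply (continuous_comp (phi1 eps) (fun x => x ^ 2)); [exact Cphi1|].
  apply (ex_derive_continuous (V := R_NormedModule)); auto_derive; exact I.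
Qed.

Lemma g_Rpower a b eps t : 0 < t -> g a b eps t = Rpower t (expo a b eps t).
Proof. intros Ht; unfold g; destruct (Rlt_dec 0 t); [reflexivity|lra]. Qed.

Lemma phi_small eps t : t <= 1 -> phi eps t = 3 * (PI / 2).
Proof. intros Ht; unfold phi; destruct (Rle_dec t 1); [field|lra]. Qed.

Lemma phi1_small eps t : t <= 1 -> phi1 eps t = 0.
Proof. intros Ht; unfold phi1, glue; destruct (Rle_dec t 1); [reflexivity|lra]. Qed.

Lemma expo_small a b eps t : t <= 1 -> expo a b eps t = a - b.
Proof. intros Ht; unfold expo; rewrite phi_small, sin_3PI2 by exact Ht; ring. Qed.

Lemma expo_bounds a b eps t : 0 < b -> a - b <= expo a b eps t <= a + b.
Proof. intros Hb; unfold expo; generalize (SIN_bound (phi eps t)); nra. Qed.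

Lemma Rabs_cos_mul_le c x : Rabs (cos c * x) <= Rabs x.
Proof.
rewrite Rabs_mult; generalize (Rabs_pos x); intros.
assert (Rabs (cos c) <= 1) by (apply Rabs_le, COS_bound). nra.
Qed.

Lemma Rabs_sin_mul_le c x : Rabs (sin c * x) <= Rabs x.
Proof.
rewrite Rabs_mult; generalize (Rabs_pos x); intros.
assert (Rabs (sin c) <= 1) by (apply Rabs_le, SIN_bound). nra.
Qed.

Section ExponentBounds.

Variables a b eps : R.
Hypothesis hb : 0 < b.
Hypothesis heps : 0 < eps.

Local Notation Q := (elasticity (expo a b eps) (expo1 b eps)).
Local Notation Q1 := (elasticity1 (expo1 b eps) (expo2 b eps)).

Lemma elasticity_small t : t <= 1 -> Q t = a - b.
Proof. intros Ht; unfold elasticity, expo1; rewrite expo_small, phi1_small by exact Ht; ring. Qed.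

Lemma elasticity_bounds t : 0 < t -> a - b - 8 * b * eps <= Q t <= a + b + 8 * b * eps.
Proof.
intros Ht; unfold elasticity, expo, expo1.
destruct (phi1_scaled_bounds eps t heps Ht) as (_ & H & _).
generalize (Rabs_cos_mul_le (phi eps t) (t * ln t * phi1 eps t)) (SIN_bound (phi eps t)).
intros Hc Hs.
assert (Hx := Rle_trans _ _ _ Hc H); apply Rabs_le_between in Hx.
replace (t * ln t * (b * cos (phi eps t) * phi1 eps t))
  with (b * (cos (phi eps t) * (t * ln t * phi1 eps t))) by ring.
nra.
Qed.

Lemma t_elasticity1_bound t : 0 < t -> eps < 1 -> Rabs (t * Q1 t) <= 168 * b * eps.
Proof.
intros Ht He1; unfold elasticity1, expo1, expo2.
destruct (phi1_scaled_bounds eps t heps Ht) as (H1 & H2 & H3).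
generalize (phi2_scaled_bound eps t heps Ht); intros H4.
set (c := cos (phi eps t)); set (s := sin (phi eps t)).
replace (t * ((2 + ln t) * (b * c * phi1 eps t)
              + t * ln t * (b * (c * phi2 eps t - s * phi1 eps t ^ 2))))
  with (b * (2 * (c * (t * phi1 eps t)) + c * (t * ln t * phi1 eps t)
             + c * (t ^ 2 * ln t * phi2 eps t) - s * (t ^ 2 * ln t * phi1 eps t ^ 2)))
  by ring.
rewrite Rabs_mult, (Rabs_pos_eq b) by lra.
replace (168 * b * eps) with (b * (2 * (8 * eps) + 8 * eps + 96 * eps + 48 * eps)) by ring.
apply Rmult_le_compat_l; [lra|].
generalize (Rabs_cos_mul_le (phi eps t) (t * phi1 eps t))
  (Rabs_cos_mul_le (phi eps t) (t * ln t * phi1 eps t))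
  (Rabs_cos_mul_le (phi eps t) (t ^ 2 * ln t * phi2 eps t))
  (Rabs_sin_mul_le (phi eps t) (t ^ 2 * ln t * phi1 eps t ^ 2)); fold c s; intros.
assert (eps ^ 2 <= eps) by nra.
unfold Rminus; eapply Rle_trans; [apply Rabs_triang|]; rewrite Rabs_Ropp.
eapply Rle_trans; [apply Rplus_le_compat_r, Rabs_triang|].
eapply Rle_trans; [apply Rplus_le_compat_r, Rplus_le_compat_r, Rabs_triang|].
rewrite Rabs_mult, (Rabs_pos_eq 2) by lra.
lra.
Qed.

End ExponentBounds.

Lemma g_0 a b eps : g a b eps 0 = 0.
Proof. unfold g; destruct (Rlt_dec 0 0); [lra|reflexivity]. Qed.

Lemma g_pos a b eps t : 0 < t -> 0 < g a b eps t.
Proof. intros Ht; rewrite g_Rpower by exact Ht; apply Rpower_pos. Qed.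

Lemma g_nonneg a b eps t : 0 <= t -> 0 <= g a b eps t.
Proof.
intros Ht; destruct (Req_dec t 0) as [->|]; [rewrite g_0; lra|].
apply Rlt_le, g_pos; lra.
Qed.

Lemma g_div_t a b eps t : 0 < t -> g a b eps t / t = Rpower t (expo a b eps t - 1).
Proof.
intros Ht; unfold Rminus; rewrite g_Rpower, Rpower_plus, Rpower_Ropp, Rpower_1 by exact Ht.
reflexivity.
Qed.

Lemma g_div_t_small a b eps t : 0 < t <= 1 -> g a b eps t / t = Rpower t (a - b - 1).
Proof. intros Ht; rewrite g_div_t, expo_small by lra; reflexivity. Qed.

Lemma g_div_t_bounds a b eps t : 0 < b -> 0 < t ->
  Rpower t (a - b - 1) <= g a b eps t / t <= Rpower t (a - b - 1) + Rpower t (a + b - 1).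
Proof.
intros Hb Ht; generalize (Rpower_pos t (a - b - 1)) (Rpower_pos t (a + b - 1)); intros.
destruct (Rle_dec t 1).
- rewrite g_div_t_small by lra; lra.
- rewrite g_div_t by exact Ht; generalize (expo_bounds a b eps t Hb); intros.
  assert (Rpower t (a - b - 1) <= Rpower t (expo a b eps t - 1)) by (apply Rle_Rpower; lra).
  assert (Rpower t (expo a b eps t - 1) <= Rpower t (a + b - 1)) by (apply Rle_Rpower; lra).
  lra.
Qed.

Lemma Rabs_g_le a b eps x : 1 < a - b -> Rabs x <= 1 -> Rabs (g a b eps x) <= Rabs x.
Proof.
intros Hab Hx; destruct (Rlt_dec 0 x) as [Hx0|Hx0].
- rewrite (Rabs_pos_eq x) in Hx |- * by lra.
  replace (g a b eps x) with (x * (g a b eps x / x)) by (field; lra).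
  rewrite g_div_t_small by lra.
  generalize (Rpower_pos x (a - b - 1)) (Rpower_le1 x (a - b - 1) ltac:(lra) ltac:(lra)).
  intros; rewrite Rabs_pos_eq; nra.
- unfold g; destruct (Rlt_dec 0 x); [lra|]; rewrite Rabs_R0; apply Rabs_pos.
Qed.

Lemma continuity_pt_g_0 a b eps : 1 < a - b -> continuity_pt (g a b eps) 0.
Proof.
intros Hab e He; exists (Rmin e 1); split; [apply Rmin_pos; lra|].
intros x [_ Hx]; simpl in *; unfold Rdist in *; rewrite g_0, !Rminus_0_r in *.
generalize (Rmin_l e 1) (Rmin_r e 1); intros.
apply Rle_lt_trans with (Rabs x); [apply Rabs_g_le; lra|lra].
Qed.

Lemma second_order_bounds q T lo hi K : 1 <= lo <= q -> q <= hi -> Rabs T <= K ->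
  (lo - 1 - K) * q <= q * (q - 1) + T <= (hi - 1 + K) * q.
Proof. intros Hq Hhi HT; apply Rabs_le_between in HT; split; nra. Qed.

Section GBounds.

Variables a b eps : R.
Hypothesis hb : 0 < b.
Hypothesis hab : 1 < a - b.

Local Notation Q := (elasticity (expo a b eps) (expo1 b eps)).
Local Notation G1 := (vpow_deriv (expo a b eps) (expo1 b eps) (g a b eps)).
Local Notation G2 := (vpow_deriv2 (expo a b eps) (expo1 b eps) (expo2 b eps) (g a b eps)).

Lemma g_deriv_0 : G1 0 = 0.
Proof. unfold vpow_deriv; rewrite g_0; unfold Rdiv; ring. Qed.

Lemma g_deriv_small t : 0 < t <= 1 -> G1 t = (a - b) * Rpower t (a - b - 1).
Proof.
intros Ht; unfold vpow_deriv.
rewrite elasticity_small, <- (g_div_t_small a b eps t Ht) by lra; field; lra.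
Qed.

Lemma lim_g_div_t_at_0 : filterlim (fun t => g a b eps t / t) (at_right 0) (locally 0).
Proof.
apply (filterlim_ext_loc (fun t => Rpower t (a - b - 1))); [|apply Rpower_at_0; lra].
apply (filter_imp _ _ (fun t Ht => eq_sym (g_div_t_small a b eps t Ht)) at_right_0_le1).
Qed.

Lemma g_diff_quotient_at_0 :
  filterlim (fun h => (g a b eps h - g a b eps 0) / h) (at_right 0) (locally (G1 0)).
Proof.
rewrite g_deriv_0; apply (filterlim_ext (fun t => g a b eps t / t)); [|exact lim_g_div_t_at_0].
intros t; rewrite g_0, Rminus_0_r; reflexivity.
Qed.

Lemma lim_g_div_t_at_p_infty :
  filterlim (fun t => g a b eps t / t) (Rbar_locally p_infty) (Rbar_locally p_infty).
Proof.
apply (filterlim_ge_p_infty (fun t => Rpower t (a - b - 1))); [|apply Rpower_at_p_infty; lra].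
exists 0; intros t Ht; apply g_div_t_bounds; assumption.
Qed.

Lemma lim_g_deriv_at_0 : filterlim G1 (at_right 0) (locally 0).
Proof.
apply (filterlim_ext_loc (fun t => (a - b) * Rpower t (a - b - 1))).
- apply (filter_imp _ _ (fun t Ht => eq_sym (g_deriv_small t Ht)) at_right_0_le1).
- apply (filterlim_comp _ _ _ (fun t => Rpower t (a - b - 1)) (Rmult (a - b)) _ (locally 0));
    [apply Rpower_at_0; lra|].
  pose proof (filterlim_Rbar_mult_l (a - b) 0) as H; simpl in H.
  rewrite Rmult_0_r in H; exact H.
Qed.

Hypothesis heps : 0 < eps.
Hypothesis heps_small : 224 * b * eps < a - 1 - b.

Lemma g_deriv_bounds t : 0 < t ->
  0 < (- 8 * b * eps + a - b) * (g a b eps t / t) /\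
  (- 8 * b * eps + a - b) * (g a b eps t / t) <= G1 t <= (8 * b * eps + a + b) * (g a b eps t / t).
Proof.
intros Ht; generalize (elasticity_bounds a b eps hb heps t Ht); intros HQ.
assert (Hw : 0 < g a b eps t / t) by (rewrite g_div_t by exact Ht; apply Rpower_pos).
replace (G1 t) with (Q t * (g a b eps t / t)) by (unfold vpow_deriv; unfold Rdiv; ring).
split; [apply Rmult_lt_0_compat; lra|split; apply Rmult_le_compat_r; lra].
Qed.

Lemma g_deriv_power_bounds t : 0 < t ->
  0 < (- 8 * b * eps + a - b) * Rpower t (a - b - 1) /\
  (- 8 * b * eps + a - b) * Rpower t (a - b - 1) <= G1 t <=
  (8 * b * eps + a + b) * (Rpower t (a - b - 1) + Rpower t (a + b - 1)).
Proof.
intros Ht; destruct (g_deriv_bounds t Ht) as (Hpos & Hlo & Hhi).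
destruct (g_div_t_bounds a b eps t hb Ht) as [Hl Hu].
generalize (Rpower_pos t (a - b - 1)); intros.
split; [nra|split; nra].
Qed.

Lemma g_deriv2_bounds t : 0 < t -> eps < 1 ->
  0 < (- 224 * b * eps + a - 1 - b) * (G1 t / t) /\
  (- 224 * b * eps + a - 1 - b) * (G1 t / t) <= G2 t <= (224 * b * eps + a - 1 + b) * (G1 t / t).
Proof.
intros Ht He1.
generalize (elasticity_bounds a b eps hb heps t Ht) (t_elasticity1_bound b eps hb heps t Ht He1).
intros HQ HQ1.
assert (Hv : 0 < g a b eps t / t ^ 2).
{ replace (g a b eps t / t ^ 2) with (g a b eps t / t / t) by (field; lra).
  rewrite g_div_t by exact Ht; apply Rdiv_lt_0_compat; [apply Rpower_pos|exact Ht]. }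
replace (G1 t / t) with (g a b eps t / t ^ 2 * Q t) by (unfold vpow_deriv; field; lra).
unfold vpow_deriv2; set (v := g a b eps t / t ^ 2) in *.
destruct (second_order_bounds (Q t) (t * elasticity1 (expo1 b eps) (expo2 b eps) t)
            (a - b - 8 * b * eps) (a + b + 8 * b * eps) (168 * b * eps)) as [Hlo Hhi];
  [lra|lra|exact HQ1|].
assert (0 < b * eps) by (apply Rmult_lt_0_compat; lra).
split; [apply Rmult_lt_0_compat; [lra|apply Rmult_lt_0_compat; lra]|split].
- replace ((-224 * b * eps + a - 1 - b) * (v * Q t)) with (v * ((-224 * b * eps + a - 1 - b) * Q t))
    by ring.
  apply Rmult_le_compat_l; nra.
- replace ((224 * b * eps + a - 1 + b) * (v * Q t)) with (v * ((224 * b * eps + a - 1 + b) * Q t))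
    by ring.
  apply Rmult_le_compat_l; nra.
Qed.

End GBounds.

Theorem theorem2p1 (a b eps : R) (ha : 0 < a) (hb : 0 < b) (hab : 1 < a - b)
  (heps0 : 0 < eps) (heps1 : eps < Rmin 1 ((a - 1 - b) / (224 * b))) :
  let G := g a b eps in
  (* (i) *)
  ((forall t, 0 <= t -> 0 <= G t) /\ G 0 = 0 /\ (forall t, 0 < t -> 0 < G t)) /\
  (* (ii) + (iii) g'(0)=0 + (iv)-(vi): G1 = g', G2 = g'' *)
  (exists G1 G2 : R -> R,
     (* G1 is the derivative of G on (0,+oo) and the right derivative at 0 *)
     (forall t, 0 < t -> is_derive G t (G1 t)) /\
     filterlim (fun h => (G h - G 0) / h) (at_right 0) (locally (G1 0)) /\
     (* G1 continuous on [0,+oo): right-continuous at 0, continuous at t > 0 *)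
     filterlim G1 (at_right 0) (locally (G1 0)) /\
     (forall t, 0 < t -> continuous G1 t) /\
     (* C^2 on (0,+oo) *)
     (forall t, 0 < t -> is_derive G1 t (G2 t)) /\
     (forall t, 0 < t -> continuous G2 t) /\
     (* (iii) g'(0) = 0 *)
     G1 0 = 0 /\
     (* (iv) *)
     (forall t, 0 < t ->
        0 < (- 8 * b * eps + a - b) * (G t / t) /\
        (- 8 * b * eps + a - b) * (G t / t) <= G1 t /\
        G1 t <= (8 * b * eps + a + b) * (G t / t)) /\
     (* (v) *)
     (forall t, 0 < t ->
        0 < (- 8 * b * eps + a - b) * Rpower t (a - b - 1) /\
        (- 8 * b * eps + a - b) * Rpower t (a - b - 1) <= G1 t /\
        G1 t <= (8 * b * eps + a + b) *
                  (Rpower t (a - b - 1) + Rpower t (a + b - 1))) /\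
     (* (vi) *)
     (forall t, 0 < t ->
        0 < (- 224 * b * eps + a - 1 - b) * (G1 t / t) /\
        (- 224 * b * eps + a - 1 - b) * (G1 t / t) <= G2 t /\
        G2 t <= (224 * b * eps + a - 1 + b) * (G1 t / t))) /\
  (* (iii) limits *)
  filterlim (fun t => G t / t) (at_right 0) (locally 0) /\
  filterlim (fun t => G t / t) (Rbar_locally p_infty) (Rbar_locally p_infty) /\
  (* (vii) strict convexity on [0,+oo) *)
  (forall x y l, 0 <= x -> 0 <= y -> x <> y -> 0 < l < 1 ->
     G (l * x + (1 - l) * y) < l * G x + (1 - l) * G y).
Proof.
cbv zeta.
assert (He1 : eps < 1) by (generalize (Rmin_l 1 ((a - 1 - b) / (224 * b))); lra).
assert (Hsmall : 224 * b * eps < a - 1 - b).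
{ assert (H : eps < (a - 1 - b) / (224 * b))
    by (generalize (Rmin_r 1 ((a - 1 - b) / (224 * b))); lra).
  apply Rlt_div_r in H; lra. }
pose proof (is_derive_expo a b eps) as Dp.
pose proof (is_derive_expo1 b eps) as Dp1.
pose proof (g_Rpower a b eps) as Eg.
assert (D1 := is_derive_vpow _ _ _ Dp Eg).
assert (D2 := is_derive_vpow_deriv _ _ _ _ Dp Dp1 Eg).
assert (B2 := fun t Ht => g_deriv2_bounds a b eps hb hab heps0 Hsmall t Ht He1).
split_conj.
- exact (g_nonneg a b eps).
- exact (g_0 a b eps).
- exact (g_pos a b eps).
- exists (vpow_deriv (expo a b eps) (expo1 b eps) (g a b eps)),
    (vpow_deriv2 (expo a b eps) (expo1 b eps) (expo2 b eps) (g a b eps)).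
  split_conj.
  + exact D1.
  + exact (g_diff_quotient_at_0 a b eps hab).
  + rewrite g_deriv_0; exact (lim_g_deriv_at_0 a b eps hab).
  + intros t Ht; exact (ex_derive_continuous _ _ (ex_intro _ _ (D2 t Ht))).
  + exact D2.
  + exact (continuous_vpow_deriv2 _ _ _ _ Dp Dp1 (continuous_expo2 b eps) Eg).
  + exact (g_deriv_0 a b eps).
  + exact (g_deriv_bounds a b eps hb hab heps0 Hsmall).
  + exact (g_deriv_power_bounds a b eps hb hab heps0 Hsmall).
  + exact B2.
- exact (lim_g_div_t_at_0 a b eps hab).
- exact (lim_g_div_t_at_p_infty a b eps hb hab).
- apply (strict_convexity_nonneg _ _ _ (continuity_pt_g_0 a b eps hab) D1 D2).
  intros t Ht; destruct (B2 t Ht) as (? & ? & ?); lra.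
Qed.
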